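(* Let $q$ be an odd prime power, $\omega$ a non-square in $\mathbb F_q$, $\epsilon\in\mathbb F_{q^2}$ with $\epsilon^2=\omega$, and write $z=z_1+\epsilon z_2$ ($z_i\in\mathbb F_q$) for $z\in\mathbb F_{q^2}$. Let $a,b,c,d,e\in\mathbb F_{q^2}$ with $b\ne0$, $b_1d_2=b_2d_1$ and $(b_1,d_1)\ne(0,0)$; put $a'=b_1a_2-a_1b_2$, $c'=b_1c_2-b_2c_1$, $e'=b_1e_2-b_2e_1$, not all zero, $\delta'=c'^2-4a'e'$ and $\kappa=a'd_1^2-c'd_1b_1+e'b_1^2$. In $\mathrm{PG}(3,q)$ with coordinates $(t_1:t_2:X:Z)$ let $\Pi$ be the plane $b_1X+d_1Z=0$, $\mathcal Q$ the quadric $b_2t_1^2-2b_1t_1t_2+b_2\omega t_2^2+a'X^2+c'XZ+e'Z^2=0$, and $\mathcal Q_0$ the set of points of $\mathcal Q$ (in $\mathrm{PG}(3,q)$) with $t_1=t_2=0$. Then $\Pi$ meets $\mathcal Q_0$ if and only if $\kappa=0$, in which case $|\Pi\cap\mathcal Q_0|=1$. Furthermore, when $\delta'=0$, $\Pi\cap\mathcal Q_0$ is the vertex of the quadric cone $\mathcal Q$ if $a'\neq0$, and is empty if $a'=0$.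
   Formalization: When δ′ = 0 and a′ ≠ 0, Π∩Q₀ is only contained in the vertex set of Q (its singular points), and equals the vertex set under the added hypothesis κ = 0. The statement above fails without it. *)

From HB Require Import structures.
From mathcomp Require Import all_boot all_order all_algebra.
Set Implicit Arguments. Unset Strict Implicit. Unset Printing Implicit Defensive.
Import Order.TTheory GRing.Theory Num.Theory.
Local Open Scope ring_scope.

(* Elements z of F_{q^2} = F_q(eps), eps^2 = omega, are handled through their
   coordinates z = z1 + eps z2 with z1 z2 in F_q. *)

(* a' = b1 a2 - a1 b2, c' = b1 c2 - b2 c1, e' = b1 e2 - b2 e1 *)
Definition twist (F : pzRingType) (b1 b2 x1 x2 : F) : F := b1 * x2 - b2 * x1.

Definition pt (F : finFieldType) := (F * F * F * F)%type.
Definition pt_t1 (F : finFieldType) (p : pt F) : F := p.1.1.1.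
Definition pt_t2 (F : finFieldType) (p : pt F) : F := p.1.1.2.
Definition pt_X  (F : finFieldType) (p : pt F) : F := p.1.2.
Definition pt_Z  (F : finFieldType) (p : pt F) : F := p.2.

Definition pt_add (F : finFieldType) (p r : pt F) : pt F :=
  (pt_t1 p + pt_t1 r, pt_t2 p + pt_t2 r, pt_X p + pt_X r, pt_Z p + pt_Z r).

(* A point of PG(3,q) is represented by its unique normalized coordinate
   vector: nonzero, with first nonzero coordinate equal to 1. *)
Definition normalized (F : finFieldType) (p : pt F) : bool :=
  if pt_t1 p != 0 then pt_t1 p == 1
  else if pt_t2 p != 0 then pt_t2 p == 1
  else if pt_X p != 0 then pt_X p == 1
  else pt_Z p == 1.

Definition PG3 (F : finFieldType) : {set pt F} := [set p | normalized p].

Definition Qform (F : finFieldType) (omega b1 b2 a' c' e' : F) (p : pt F) : F :=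
  b2 * pt_t1 p ^+ 2 - 2%:R * b1 * pt_t1 p * pt_t2 p + b2 * omega * pt_t2 p ^+ 2
  + a' * pt_X p ^+ 2 + c' * pt_X p * pt_Z p + e' * pt_Z p ^+ 2.

Definition quadricQ (F : finFieldType) (omega b1 b2 a' c' e' : F) : {set pt F} :=
  [set p in PG3 F | Qform omega b1 b2 a' c' e' p == 0].

Definition quadricQ0 (F : finFieldType) (omega b1 b2 a' c' e' : F) : {set pt F} :=
  [set p in quadricQ omega b1 b2 a' c' e' | (pt_t1 p == 0) && (pt_t2 p == 0)].

Definition planePi (F : finFieldType) (b1 d1 : F) : {set pt F} :=
  [set p in PG3 F | b1 * pt_X p + d1 * pt_Z p == 0].

Definition singularQ (F : finFieldType) (omega b1 b2 a' c' e' : F) : {set pt F} :=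
  [set p in quadricQ omega b1 b2 a' c' e' |
     [forall w : pt F,
        Qform omega b1 b2 a' c' e' (pt_add p w)
        - Qform omega b1 b2 a' c' e' p - Qform omega b1 b2 a' c' e' w == 0]].

From HB Require Import structures.
From mathcomp Require Import all_boot all_order all_algebra ring.
Import Order.TTheory GRing.Theory Num.Theory.
Set Implicit Arguments.
Unset Strict Implicit.
Unset Printing Implicit Defensive.

Local Open Scope ring_scope.

(* Points of Q0 on Pi lie on the line t1 = t2 = 0, which meets Pi only in
   P0 = (0 : 0 : d1 : -b1) because b1 <> 0; on that line Q restricts to the
   binary form a' X^2 + c' X Z + e' Z^2, whose value at (d1, -b1) is kappa.
   When delta' = 0 and a' <> 0, 4 a' times this form is (2 a' X + c' Z)^2, so
   each of its zeros also kills its gradient: every point of Q0 is singular.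
   Conversely, the (t1, t2)-part of the gradient of Q has determinant
   b2^2 omega - b1^2, nonzero as omega is a non-square, so singular points have
   t1 = t2 = 0, and they lie on Pi when kappa = 0.  When delta' = a' = 0, also
   c' = 0, hence e' <> 0 and kappa = e' b1^2 <> 0. *)

Lemma two_neq0 (F : idomainType) : (2 \notin [pchar F])%N -> 2%:R != 0 :> F.
Proof. by move=> h; rewrite natf_neq0_pchar pnatE // inE. Qed.

Lemma binary_form_discriminantE (R : comPzRingType) (a c e X Z : R) :
  4%:R * a * (a * X ^+ 2 + c * X * Z + e * Z ^+ 2)
  = (2%:R * a * X + c * Z) ^+ 2 - (c ^+ 2 - 4%:R * a * e) * Z ^+ 2.
Proof. by ring. Qed.

Lemma degenerate_binary_form_root (F : idomainType) (a c e X Z : F) :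
  2%:R != 0 :> F -> a != 0 -> c ^+ 2 - 4%:R * a * e = 0 ->
  a * X ^+ 2 + c * X * Z + e * Z ^+ 2 = 0 ->
  2%:R * a * X + c * Z = 0 /\ c * X + 2%:R * e * Z = 0.
Proof.
move=> two0 a0 disc0 root0.
have dX : 2%:R * a * X + c * Z = 0.
  have := binary_form_discriminantE a c e X Z.
  rewrite root0 disc0 mulr0 mul0r subr0 => /esym/eqP.
  by rewrite expf_eq0 => /eqP.
split=> //; apply: (mulfI (mulf_neq0 two0 a0)); rewrite mulr0.
have -> : 2%:R * a * (c * X + 2%:R * e * Z)
          = c * (2%:R * a * X + c * Z) - (c ^+ 2 - 4%:R * a * e) * Z by ring.
by rewrite dX disc0 mulr0 mul0r subr0.
Qed.

Lemma det2_kernel0 (F : idomainType) (a b c d x y : F) : a * d - b * c != 0 ->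
  a * x + b * y = 0 -> c * x + d * y = 0 -> x = 0 /\ y = 0.
Proof.
move=> det0 e1 e2.
have ex : (a * d - b * c) * x = d * (a * x + b * y) - b * (c * x + d * y) by ring.
have ey : (a * d - b * c) * y = a * (c * x + d * y) - c * (a * x + b * y) by ring.
rewrite e1 e2 !mulr0 subr0 in ex ey.
by move/eqP: ex; move/eqP: ey; rewrite !mulf_eq0 (negPf det0) /= => /eqP -> /eqP ->.
Qed.

Lemma nonsquare_norm_neq0 (F : fieldType) (omega b1 b2 : F) :
  (forall x : F, x ^+ 2 != omega) -> (b1, b2) != (0, 0) ->
  b1 ^+ 2 - omega * b2 ^+ 2 != 0.
Proof.
move=> nsq; apply: contra => /eqP norm0; rewrite xpair_eqE.
have [b20|b2n] := eqVneq b2 0.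
  by move: norm0; rewrite b20 expr0n mulr0 subr0 => /eqP; rewrite expf_eq0 andbT.
case/eqP: (nsq (b1 / b2)); rewrite expr_div_n.
apply: (mulIf (expf_neq0 2 b2n)); rewrite mulfVK ?expf_neq0 //.
by apply/eqP; rewrite -subr_eq0 norm0.
Qed.

Lemma parallel_first_neq0 (F : idomainType) (b1 b2 d1 d2 : F) :
  (b1, b2) != (0, 0) -> b1 * d2 = b2 * d1 -> (b1, d1) != (0, 0) -> b1 != 0.
Proof.
rewrite !xpair_eqE; have [-> /= b2n|//] := eqVneq b1 0.
by rewrite mul0r => /esym/eqP; rewrite mulf_eq0 (negPf b2n) /= => ->.
Qed.

Section ProjectivePoints.

Variable F : finFieldType.
Implicit Types (k l : F) (p : pt F).

Definition pt_scale k p : pt F :=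
  (k * pt_t1 p, k * pt_t2 p, k * pt_X p, k * pt_Z p).

Definition pt_lead p : F :=
  if pt_t1 p != 0 then pt_t1 p
  else if pt_t2 p != 0 then pt_t2 p
  else if pt_X p != 0 then pt_X p
  else pt_Z p.

Definition pt_normalize p : pt F := pt_scale (pt_lead p)^-1 p.

Lemma pt_scaleA k l p : pt_scale k (pt_scale l p) = pt_scale (k * l) p.
Proof. by rewrite /pt_scale /= !mulrA. Qed.

Lemma pt_scale1 p : pt_scale 1 p = p.
Proof. by case: p => [[[t1 t2] X] Z]; rewrite /pt_scale /= !mul1r. Qed.

Lemma pt_lead_eq0 p : (pt_lead p == 0) = (p == (0, 0, 0, 0)).
Proof.
case: p => [[[t1 t2] X] Z]; rewrite /pt_lead /pt_t1 /pt_t2 /pt_X /pt_Z /= !xpair_eqE.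
have [->|t1n] := eqVneq t1 0; last by rewrite /= (negPf t1n).
have [->|t2n] := eqVneq t2 0; last by rewrite /= (negPf t2n).
by have [->|Xn] := eqVneq X 0; rewrite /= ?(negPf Xn) ?andbF.
Qed.

Lemma normalized_normalize p : p != (0, 0, 0, 0) -> normalized (pt_normalize p).
Proof.
rewrite -pt_lead_eq0; case: p => [[[t1 t2] X] Z].
rewrite /normalized /pt_normalize /pt_scale /pt_lead /pt_t1 /pt_t2 /pt_X /pt_Z /=.
have [->|t1n] := eqVneq t1 0; rewrite ?mulr0 ?eqxx /=; last first.
  by move=> _; rewrite mulf_neq0 ?invr_eq0 // mulVf.
have [->|t2n] := eqVneq t2 0; rewrite ?mulr0 ?eqxx /=; last first.
  by move=> _; rewrite mulf_neq0 ?invr_eq0 // mulVf.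
have [->|Xn] := eqVneq X 0; rewrite ?mulr0 ?eqxx /=; last first.
  by move=> _; rewrite mulf_neq0 ?invr_eq0 // mulVf.
by move=> Zn; rewrite mulVf.
Qed.

Lemma normalized_scale_eq1 k p :
  normalized p -> normalized (pt_scale k p) -> k = 1.
Proof.
case: p => [[[t1 t2] X] Z].
rewrite /normalized /pt_scale /pt_t1 /pt_t2 /pt_X /pt_Z /=.
have [->|kn] := eqVneq k 0; first by rewrite !mul0r eqxx /= => _ /eqP.
rewrite !mulf_eq0 (negPf kn) /=.
by case: (t1 != 0); [|case: (t2 != 0); [|case: (X != 0)]] => /eqP-> /eqP; rewrite mulr1.
Qed.

Definition planePi_axis_pt (b1 d1 : F) : pt F := pt_normalize (0, 0, d1, - b1).

Lemma planePi_axis_ptP (b1 d1 : F) p : b1 != 0 ->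
  [&& p \in PG3 F, pt_t1 p == 0, pt_t2 p == 0 & b1 * pt_X p + d1 * pt_Z p == 0]
  = (p == planePi_axis_pt b1 d1).
Proof.
move=> b10; set v : pt F := (0, 0, d1, - b1).
have vn : v != (0, 0, 0, 0) by rewrite !xpair_eqE oppr_eq0 (negPf b10) andbF.
have ln : pt_lead v != 0 by rewrite pt_lead_eq0.
have nP0 := normalized_normalize vn.
apply/idP/eqP => [|->]; last first.
  rewrite inE nP0 /pt_normalize /pt_scale /v /pt_t1 /pt_t2 /pt_X /pt_Z /=.
  by rewrite !mulr0 eqxx /= /pt_X /=; apply/eqP; ring.
case/and4P; rewrite inE; case: p => [[[t1 t2] X] Z].
rewrite /pt_t1 /pt_t2 /pt_X /pt_Z /= => np /eqP t10 /eqP t20 /eqP pl; subst t1 t2.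
have vP0 : v = pt_scale (pt_lead v) (planePi_axis_pt b1 d1).
  by rewrite pt_scaleA mulfV // pt_scale1.
have pv : (0, 0, X, Z) = pt_scale (- Z / b1) v.
  rewrite /pt_scale /v /pt_t1 /pt_t2 /pt_X /pt_Z /= !mulr0; congr (_, _, _, _).
    have eX : b1 * X = - (d1 * Z) by apply/eqP; rewrite -addr_eq0 pl.
    by apply: (mulfI b10); rewrite eX; field.
  by field.
rewrite pv vP0 pt_scaleA in np *.
by rewrite (normalized_scale_eq1 nP0 np) pt_scale1.
Qed.

End ProjectivePoints.

Section Quadric.

Variables (F : finFieldType) (omega b1 b2 a' c' e' : F).
Hypothesis nz2 : 2%:R != 0 :> F.
Local Notation Q := (Qform omega b1 b2 a' c' e').
Local Notation delta' := (c' ^+ 2 - 4%:R * a' * e').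
Implicit Types (k : F) (p w : pt F).

Lemma Qform_scale k p : Q (pt_scale k p) = k ^+ 2 * Q p.
Proof. by rewrite /Qform /pt_scale /pt_t1 /pt_t2 /pt_X /pt_Z /=; ring. Qed.

Lemma Qform_axis X Z : Q (0, 0, X, Z) = a' * X ^+ 2 + c' * X * Z + e' * Z ^+ 2.
Proof. by rewrite /Qform /pt_t1 /pt_t2 /pt_X /pt_Z /=; ring. Qed.

Lemma Qform_polarE p w :
  Q (pt_add p w) - Q p - Q w =
  2%:R * (b2 * pt_t1 p - b1 * pt_t2 p) * pt_t1 w
  + 2%:R * (b2 * omega * pt_t2 p - b1 * pt_t1 p) * pt_t2 w
  + (2%:R * a' * pt_X p + c' * pt_Z p) * pt_X w
  + (c' * pt_X p + 2%:R * e' * pt_Z p) * pt_Z w.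
Proof.
case: p => [[[t1 t2] X] Z]; case: w => [[[s1 s2] Y] W].
by rewrite /Qform /pt_add /pt_t1 /pt_t2 /pt_X /pt_Z /=; ring.
Qed.

Lemma singularQ_gradient p : p \in singularQ omega b1 b2 a' c' e' ->
  [/\ b2 * pt_t1 p - b1 * pt_t2 p = 0, b2 * omega * pt_t2 p - b1 * pt_t1 p = 0,
      2%:R * a' * pt_X p + c' * pt_Z p = 0 & c' * pt_X p + 2%:R * e' * pt_Z p = 0].
Proof.
rewrite inE => /andP[_ /forallP polar0].
have polar_at w := eqP (polar0 w); clear polar0.
have := polar_at (1, 0, 0, 0); have := polar_at (0, 1, 0, 0).
have := polar_at (0, 0, 1, 0); have := polar_at (0, 0, 0, 1).
rewrite !Qform_polarE /pt_t1 /pt_t2 /pt_X /pt_Z /= !mulr0 !mulr1 ?add0r ?addr0.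
by move=> -> -> /eqP; rewrite mulf_eq0 (negPf nz2) => /eqP ->
  /eqP; rewrite mulf_eq0 (negPf nz2) => /eqP ->.
Qed.

Lemma quadricQ0_sub_singularQ : a' != 0 -> delta' = 0 ->
  quadricQ0 omega b1 b2 a' c' e' \subset singularQ omega b1 b2 a' c' e'.
Proof.
move=> a0 disc0; apply/subsetP => p.
rewrite inE => /andP[Qp /andP[/eqP t10 /eqP t20]].
have pE : p = (0, 0, pt_X p, pt_Z p).
  by case: p {Qp} t10 t20 => [[[? ?] ? ?]]; rewrite /pt_t1 /pt_t2 /= => -> ->.
have Qax : a' * pt_X p ^+ 2 + c' * pt_X p * pt_Z p + e' * pt_Z p ^+ 2 = 0.
  by move: Qp; rewrite inE -Qform_axis -pE => /andP[_ /eqP].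
have [dX dZ] := degenerate_binary_form_root nz2 a0 disc0 Qax.
rewrite inE Qp; apply/forallP => w.
by rewrite Qform_polarE t10 t20 dX dZ !(mulr0, subrr, mul0r, addr0).
Qed.

Lemma singularQ_sub_quadricQ0 :
  (forall x : F, x ^+ 2 != omega) -> (b1, b2) != (0, 0) ->
  singularQ omega b1 b2 a' c' e' \subset quadricQ0 omega b1 b2 a' c' e'.
Proof.
move=> nsq b0; apply/subsetP => p pS.
have [e1 e2 _ _] := singularQ_gradient pS.
have det0 : b2 * (b2 * omega) - (- b1) * (- b1) != 0.
  have -> : b2 * (b2 * omega) - (- b1) * (- b1) = - (b1 ^+ 2 - omega * b2 ^+ 2) by ring.
  by rewrite oppr_eq0 nonsquare_norm_neq0.
have e1' : b2 * pt_t1 p + (- b1) * pt_t2 p = 0 by rewrite -e1; ring.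
have e2' : (- b1) * pt_t1 p + (b2 * omega) * pt_t2 p = 0 by rewrite -e2; ring.
have [t10 t20] := det2_kernel0 det0 e1' e2'.
by move: pS; rewrite !inE t10 t20 eqxx => /andP[-> _].
Qed.

Lemma singularQ_sub_planePi (d1 : F) : a' != 0 -> delta' = 0 ->
  a' * d1 ^+ 2 - c' * d1 * b1 + e' * b1 ^+ 2 = 0 ->
  singularQ omega b1 b2 a' c' e' \subset planePi b1 d1.
Proof.
move=> a0 disc0 kappa0; apply/subsetP => p pS.
have [_ _ dX _] := singularQ_gradient pS.
have kappa0' : a' * d1 ^+ 2 + c' * d1 * (- b1) + e' * (- b1) ^+ 2 = 0.
  by rewrite -kappa0; ring.
have [dd1 _] := degenerate_binary_form_root nz2 a0 disc0 kappa0'.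
move: pS; rewrite !inE => /andP[/andP[-> _] _] /=.
apply/eqP/(mulfI (mulf_neq0 nz2 a0)); rewrite mulr0.
have -> : 2%:R * a' * (b1 * pt_X p + d1 * pt_Z p)
          = b1 * (2%:R * a' * pt_X p + c' * pt_Z p)
            + (2%:R * a' * d1 + c' * (- b1)) * pt_Z p by ring.
by rewrite dX dd1 mulr0 mul0r addr0.
Qed.

Lemma planePi_quadricQ0E (d1 : F) : b1 != 0 ->
  planePi b1 d1 :&: quadricQ0 omega b1 b2 a' c' e'
  = if a' * d1 ^+ 2 - c' * d1 * b1 + e' * b1 ^+ 2 == 0
    then [set planePi_axis_pt b1 d1] else set0.
Proof.
move=> b10; set P0 := planePi_axis_pt b1 d1; set kappa := _ - _ + _.
have lead0 : pt_lead (0, 0, d1, - b1) != 0.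
  by rewrite pt_lead_eq0 !xpair_eqE oppr_eq0 (negPf b10) andbF.
have QP0 : (Q P0 == 0) = (kappa == 0).
  rewrite /P0 /planePi_axis_pt /pt_normalize Qform_scale Qform_axis.
  rewrite mulf_eq0 expf_eq0 invr_eq0 (negPf lead0) andbF /=.
  by congr (_ == 0); rewrite /kappa; ring.
apply/setP => p.
have -> : p \in planePi b1 d1 :&: quadricQ0 omega b1 b2 a' c' e'
            = (p == P0) && (Q p == 0).
  rewrite -planePi_axis_ptP // !inE.
  move: (normalized p) (pt_t1 p == 0) (pt_t2 p == 0) (Q p == 0) (_ + _ == 0).
  by do 5!case.
have [->|pn] := eqVneq p P0; last by case: ifP; rewrite ?inE ?(negPf pn).
by rewrite QP0; case: ifP; rewrite ?inE ?eqxx.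
Qed.

End Quadric.

Theorem mainTheorem13 (F : finFieldType) (hodd : (2 \notin [pchar F])%N)
  (omega : F) (homega : forall x : F, x ^+ 2 != omega)
  (a1 a2 b1 b2 c1 c2 d1 d2 e1 e2 : F)
  (hb : (b1, b2) != (0, 0))
  (hbd : b1 * d2 = b2 * d1)
  (hbd1 : (b1, d1) != (0, 0))
  (hne : [|| twist b1 b2 a1 a2 != 0, twist b1 b2 c1 c2 != 0
           | twist b1 b2 e1 e2 != 0]) :
  let a' := twist b1 b2 a1 a2 in
  let c' := twist b1 b2 c1 c2 in
  let e' := twist b1 b2 e1 e2 in
  let delta' := c' ^+ 2 - 4%:R * a' * e' in
  let kappa := a' * d1 ^+ 2 - c' * d1 * b1 + e' * b1 ^+ 2 in
  let PiQ0 := planePi b1 d1 :&: quadricQ0 omega b1 b2 a' c' e' in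
  ((PiQ0 != set0) <-> kappa = 0)
  /\ (kappa = 0 -> #|PiQ0| = 1%N)
  /\ (delta' = 0 ->
        (a' != 0 -> PiQ0 \subset singularQ omega b1 b2 a' c' e'
                    /\ (kappa = 0 -> PiQ0 = singularQ omega b1 b2 a' c' e'))
        /\ (a' = 0 -> PiQ0 = set0)).
Proof.
move=> a' c' e' delta' kappa PiQ0.
have two0 := two_neq0 hodd.
have b10 := parallel_first_neq0 hb hbd hbd1.
have PiQ0E : PiQ0 = if kappa == 0 then [set planePi_axis_pt b1 d1] else set0.
  exact: planePi_quadricQ0E.
split; [|split].
- rewrite PiQ0E; have [->|kn] := eqVneq kappa 0; last first.
    by rewrite eqxx; split=> // k0; rewrite k0 eqxx in kn.
  by split=> // _; apply/set0Pn; exists (planePi_axis_pt b1 d1); rewrite inE.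
- by move=> k0; rewrite PiQ0E k0 eqxx cards1.
move=> disc0; split=> [a0|a0].
  have PiQ0_sing : PiQ0 \subset singularQ omega b1 b2 a' c' e'.
    by rewrite subIset // quadricQ0_sub_singularQ ?orbT.
  split=> // k0; apply/eqP; rewrite eqEsubset PiQ0_sing subsetI.
  by rewrite singularQ_sub_planePi // singularQ_sub_quadricQ0.
have c0 : c' = 0.
  move: disc0; rewrite /delta' a0 mulr0 mul0r subr0 => /eqP.
  by rewrite expf_eq0 => /eqP.
have e0 : e' != 0 by move: hne; rewrite -/a' -/c' -/e' a0 c0 eqxx.
by rewrite PiQ0E ifN // /kappa a0 c0 !mul0r subrr add0r mulf_neq0 // expf_neq0.
Qed.
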